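(* Suppose that for every $s\in G$ and every $x_{P(s)}\in\mathcal{X}_{P(s)}$ there is a (possibly infinite) set $\Gamma(s,x_{P(s)})$ of real-valued functions on $\mathcal{X}_s$ such that the local credal set $\mathcal{M}_{s\mid x_{P(s)}}$ is exactly the set of real-valued functions $p$ on $\mathcal{X}_s$ satisfying $$\sum_{z_s\in\mathcal{X}_s}p(z_s)=1\quad\text{and}\quad \sum_{z_s\in\mathcal{X}_s}p(z_s)\gamma(z_s)\geq 0\ \text{ for all }\gamma\in\Gamma(s,x_{P(s)}).$$ Then $\mathcal{F}^{\mathrm{irr}}_G(X_G)$ consists exactly of those probability mass functions $P(X_G)$ on $\mathcal{X}_G$ such that for all $s\in G$, all $x_{N(s)}\in\mathcal{X}_{N(s)}$ and all $\gamma\in\Gamma(s,x_{P(s)})$ (where $x_{P(s)}$ is the restriction of $x_{N(s)}$ to $P(s)$): $$\sum_{z_s\in\mathcal{X}_s}\ \sum_{z_{D(s)}\in\mathcal{X}_{D(s)}}P(z_s,z_{D(s)},x_{N(s)})\,\gamma(z_s)\geq 0.$$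
   Context: Setting: $G$ is a finite set of nodes forming a directed acyclic graph (DAG). Each node $s\in G$ carries a variable $X_s$ taking values in a finite nonempty set $\mathcal{X}_s$; for $S\subseteq G$, $X_S=(X_s)_{s\in S}$ takes values $x_S$ in $\mathcal{X}_S=\times_{s\in S}\mathcal{X}_s$ ($\mathcal{X}_\emptyset$ is a singleton). Graph notions: $P(s)$ is the set of parents of $s$; $s\sqsubseteq v$ means there is a directed path (possibly of length 0) from $s$ to $v$, and $s\sqsubset v$ means $s\sqsubseteq v$ and $s\neq v$; $D(s)=\{v\in G: s\sqsubset v\}$ (descendants); $N(s)=G\setminus(\{s\}\cup D(s))$ (non-descendants); $N'(s)=N(s)\setminus P(s)$ (non-parent non-descendants). Local models: for every $s\in G$ and $x_{P(s)}\in\mathcal{X}_{P(s)}$, $\mathcal{M}_{s\mid x_{P(s)}}$ is a nonempty closed convex set of probability mass functions on $\mathcal{X}_s$. A full conditional probability measure on a finite set $\Omega$ is a map $P:\mathcal{P}(\Omega)\times(\mathcal{P}(\Omega)\setminus\{\emptyset\})\to\mathbb{R}$, $(A,B)\mapsto P(A\mid B)$, such that for all $A,C\subseteq\Omega$ and nonempty $B\subseteq \Omega$: (F1) $P(\cdot\mid B)$ is a probability measure on $\mathcal{P}(\Omega)$ with $P(B\mid B)=1$; (F2) $P(A\cap C\mid B)=P(A\mid C\cap B)P(C\mid B)$ whenever $C\cap B\neq\emptyset$. For $S\subseteq G$ and $x_S\in\mathcal{X}_S$, the event $x_S$ denotes $\{z_G\in\mathcal{X}_G: z_S=x_S\}$;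 $P(A)=P(A\mid\mathcal{X}_G)$. The irrelevant natural extension $\mathcal{F}^{\mathrm{irr}}_G$ is the set of all full conditional probability measures $P$ on $\mathcal{X}_G$ such that for all $s\in G$ and all $x_{N(s)}\in\mathcal{X}_{N(s)}$, the mass function $P(X_s\mid x_{N(s)})$ (i.e. $z_s\mapsto P(z_s\mid x_{N(s)})$) belongs to $\mathcal{M}_{s\mid x_{P(s)}}$, where $x_{P(s)}$ is the restriction of $x_{N(s)}$ to $P(s)$. $\mathcal{F}^{\mathrm{irr}}_G(X_G)$ denotes the set of global mass functions $x_G\mapsto P(x_G)$ for $P\in\mathcal{F}^{\mathrm{irr}}_G$. *)

From HB Require Import structures.
From mathcomp Require Import all_boot all_order all_algebra.
Set Implicit Arguments. Unset Strict Implicit. Unset Printing Implicit Defensive.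
Import Order.TTheory GRing.Theory Num.Theory.
Local Open Scope ring_scope.

Definition asg (G : finType) (X : G -> finType) : finType :=
  {dffun forall s : G, X s}.

(* The event x_S = { z_G : z_S = x_S }, given via any full assignment x
   extending the partial assignment x_S. *)
Definition ev (G : finType) (X : G -> finType) (S : {set G}) (x : asg X)
  : {set asg X} := [set z : asg X | [forall s in S, z s == x s]].

Definition evn (G : finType) (X : G -> finType) (s : G) (a : X s)
  : {set asg X} := [set z : asg X | z s == a].

Definition edge (G : finType) (par : G -> {set G}) : rel G :=
  fun u v => u \in par v.

Definition dag (G : finType) (par : G -> {set G}) : Prop :=
  forall u v : G, u \in par v -> ~~ connect (edge par) v u.

Definition desc (G : finType) (par : G -> {set G}) (s : G) : {set G} :=
  [set v | (v != s) && connect (edge par) s v].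

Definition nondesc (G : finType) (par : G -> {set G}) (s : G) : {set G} :=
  ~: (s |: desc par s).

(* Full conditional probability measure on a finite set T. Values at B = set0
   are irrelevant (not constrained). *)
Definition is_fcp (R : realFieldType) (T : finType)
  (P : {set T} -> {set T} -> R) : Prop :=
  (forall B : {set T}, B != set0 ->
     [/\ forall A : {set T}, 0 <= P A B,
         P setT B = 1,
         forall A C : {set T}, [disjoint A & C] -> P (A :|: C) B = P A B + P C B
       & P B B = 1]) /\
  (forall A B C : {set T}, B != set0 -> C :&: B != set0 ->
     P (A :&: C) B = P A (C :&: B) * P C B).

Definition locmass (R : realFieldType) (G : finType) (X : G -> finType)
  (par : G -> {set G}) (P : {set asg X} -> {set asg X} -> R) (s : G)
  (x : asg X) : {ffun X s -> R} :=
  [ffun a => P (evn a) (ev (nondesc par s) x)].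

(* Irrelevant natural extension: M s x is the local model M_{s | x_{P(s)}}. *)
Definition Firr (R : realFieldType) (G : finType) (X : G -> finType)
  (par : G -> {set G}) (M : forall s : G, asg X -> {ffun X s -> R} -> Prop)
  (P : {set asg X} -> {set asg X} -> R) : Prop :=
  is_fcp P /\ forall (s : G) (x : asg X), M s x (locmass par P s x).

From HB Require Import structures.
From mathcomp Require Import all_boot all_order all_algebra.
From Stdlib Require Import ClassicalEpsilon.
Import Order.TTheory GRing.Theory Num.Theory.
Local Open Scope ring_scope.

(* Necessity is the chain rule: for w in the event B = {x_{N(s)}},
   P(w) = P(w | B) P(B), so the constrained sum equals P(B) times the
   gamma-expectation of the local mass function P(X_s | B), which lies in the
   local model.
   For sufficiency, P is the lexicographic conditional of a finite sequence of
   mass functions: q first, then for k = 0, ..., |G| the sum of all Bayesian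
   networks in which the nodes of some k-element set T are uniform and every
   other node follows a fixed element of its local model. Conditioning on B
   uses the first layer that charges B. If it is q, the constraints on q are
   exactly what the local model requires. Otherwise every network of that
   layer with s in T gives B mass zero, because it gives B the same mass as
   the network for T minus s from the previous layer; in the remaining
   networks X_s given B follows the chosen local mass function. The last
   layer (T = G) charges every point, so every conditioning event is covered. *)

Section LexicographicConditional.
Context {R : realFieldType} {T : finType}.
Variables (mu : nat -> T -> R) (N : nat).
Hypothesis mu_ge0 : forall n w, 0 <= mu n w.
Hypothesis mu_charged : forall w, exists2 n, (n < N)%N & 0 < mu n w.

Definition mass n (B : {set T}) := \sum_(w in B) mu n w.

Definition first_charged (B : {set T}) :=
  find (fun n => 0 < mass n B) (iota 0 N).

Definition lexcond (A B : {set T}) :=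
  mass (first_charged B) (A :&: B) / mass (first_charged B) B.

Lemma mass_ge0 n B : 0 <= mass n B.
Proof. exact: sumr_ge0. Qed.

Lemma le_mass n {A B : {set T}} : A \subset B -> mass n A <= mass n B.
Proof.
move=> sAB; rewrite /mass [leRHS](big_setID A) /= (setIidPr sAB) lerDl.
exact: mass_ge0.
Qed.

Lemma massU n (A C : {set T}) :
  [disjoint A & C] -> mass n (A :|: C) = mass n A + mass n C.
Proof.
by move=> dAC; rewrite /mass -bigU //; apply: eq_bigl => w; rewrite !inE.
Qed.

Lemma first_chargedP {B : {set T}} : B != set0 ->
  [/\ (first_charged B < N)%N, 0 < mass (first_charged B) B
    & forall j, (j < first_charged B)%N -> mass j B <= 0].
Proof.
case/set0Pn=> w wB.
have charged : has (fun n => 0 < mass n B) (iota 0 N).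
  have [n nN mun] := mu_charged w; apply/hasP; exists n; first by rewrite mem_iota.
  apply: lt_le_trans mun _; rewrite /mass (bigD1 w) //= lerDl.
  exact: sumr_ge0.
have fN : (first_charged B < N)%N by rewrite -(size_iota 0 N) -has_find.
split=> //; first by have := nth_find 0%N charged; rewrite nth_iota.
move=> j jk; have := before_find 0%N jk; rewrite nth_iota ?(ltn_trans jk) //.
by move/negbT; rewrite -leNgt.
Qed.

Lemma first_charged_eq B k : (k < N)%N -> 0 < mass k B ->
  (forall j, (j < k)%N -> mass j B <= 0) -> first_charged B = k.
Proof.
move=> kN pk bk; have Bn : B != set0.
  by apply: contraTneq pk => ->; rewrite /mass big_set0 ltxx.
have [_ pf bf] := first_chargedP Bn.
case: (ltngtP (first_charged B) k) => // h.
  by have := bk _ h; rewrite leNgt pf.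
by have := bf _ h; rewrite leNgt pk.
Qed.

Lemma lexcond_fcp : is_fcp lexcond.
Proof.
split=> [B Bn | A B C Bn CBn].
  have [_ pf _] := first_chargedP Bn.
  have mB : mass (first_charged B) B != 0 by rewrite gt_eqF.
  split=> [A | | A C dAC |]; rewrite /lexcond ?setTI ?setIid ?divff //.
    by rewrite divr_ge0 ?mass_ge0.
  rewrite setIUl massU ?mulrDl //; apply: disjointWl (subsetIl A B) _.
  by rewrite disjoint_sym; apply: disjointWl (subsetIl C B) _; rewrite disjoint_sym.
have [_ _ bf] := first_chargedP Bn; set k := first_charged B in bf *.
have [pos|] := boolP (0 < mass k (C :&: B)).
  have fCB : first_charged (C :&: B) = k.
    apply: first_charged_eq => // [|j jk]; first by have [] := first_chargedP Bn.
    exact: le_trans (le_mass j (subsetIr C B)) (bf _ jk).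
  by rewrite /lexcond fCB -/k setIA mulrA divfK ?gt_eqF.
rewrite lt_def mass_ge0 andbT negbK => /eqP mCB0.
have mACB0 : mass k (A :&: C :&: B) = 0.
  apply/eqP; rewrite eq_le mass_ge0 andbT -mCB0 le_mass //.
  by rewrite -setIA subsetIr.
by rewrite /lexcond -/k setIA mACB0 mCB0 !mul0r mulr0.
Qed.

End LexicographicConditional.

Section FullConditional.
Context {R : realFieldType} {T : finType} {P : {set T} -> {set T} -> R}.
Hypothesis hP : is_fcp P.

Lemma fcp_set0 B : B != set0 -> P set0 B = 0.
Proof.
move=> Bn; have [_ _ Padd _] := hP.1 B Bn.
have := Padd set0 set0; rewrite setU0 -setI_eq0 setI0 eqxx => /(_ isT) /eqP.
by rewrite -subr_eq0 opprD addNKr oppr_eq0 => /eqP.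
Qed.

Lemma fcp_sumE B A : B != set0 -> P A B = \sum_(w in A) P [set w] B.
Proof.
move=> Bn; have [_ _ Padd _] := hP.1 B Bn.
have [n ltAn] := ubnP #|A|; elim: n A ltAn => // n IHn A /ltnSE leAn.
have [->|[a aA]] := set_0Vmem A; first by rewrite big_set0 fcp_set0.
rewrite (big_setD1 a aA) -IHn; last by rewrite (cardsD1 a A) aA in leAn.
by rewrite /= -Padd ?setD1K // disjoints1 in_setD1 eqxx.
Qed.

Lemma fcp_sum_points B : B != set0 -> \sum_(w in B) P [set w] B = 1.
Proof. by move=> Bn; rewrite -fcp_sumE //; have [] := hP.1 B Bn. Qed.

Lemma fcp_setIl A B : B != set0 -> P (A :&: B) B = P A B.
Proof.
by move=> Bn; rewrite hP.2 ?setIid //; have [_ _ _ ->] := hP.1 B Bn; rewrite mulr1.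
Qed.

Lemma fcp_point_chain {B : {set T}} {w} :
  w \in B -> P [set w] setT = P [set w] B * P B setT.
Proof.
move=> wB; have Bn : B != set0 by apply/set0Pn; exists w.
rewrite -{1}(setIidPl (_ : [set w] \subset B)) ?sub1set // hP.2 ?setIT //.
by apply/set0Pn; exists w.
Qed.

End FullConditional.

Section BayesianNetwork.
Context {G : finType} {X : G -> finType}.
Variable par : G -> {set G}.
Hypothesis hdag : dag par.

Lemma evP (S : {set G}) (y z : asg X) :
  reflect (forall u, u \in S -> z u = y u) (z \in ev S y).
Proof.
rewrite inE; apply: (iffP forall_inP) => h u uS; first exact/eqP/h.
exact/eqP/h.
Qed.

Lemma ev_setT (y : asg X) : ev setT y = [set y].
Proof.
apply/setP=> z; rewrite inE; apply/evP/eqP => [h|-> //].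
by apply/ffunP => u; rewrite h ?inE.
Qed.

Lemma in_nondesc s u :
  (u \in nondesc par s) = (u != s) && ~~ connect (edge par) s u.
Proof. by rewrite !inE negb_or; case: eqP. Qed.

Lemma par_nondesc s u : u \in par s -> u \in nondesc par s.
Proof.
move=> us; rewrite in_nondesc (negbTE (hdag _ _ us)) andbT.
by apply: contraNneq (hdag _ _ us) => ->.
Qed.

Lemma nondesc_par s t u :
  t \in nondesc par s -> u \in par t -> u \in nondesc par s.
Proof.
rewrite !in_nondesc => /andP[_ nst] ut; apply/andP; split.
  by apply: contraNneq nst => <-; apply: connect1.
by apply: contra nst => /connect_trans; apply; apply: connect1.
Qed.

Lemma dag_source {S : {set G}} : S != set0 ->
  exists2 t, t \in S & forall u, u \in par t -> u \notin S.
Proof.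
pose anc t := [set u | (u != t) && connect (edge par) u t].
case/set0Pn => t1 t1S; have [t tS tmin] := arg_minnP (fun t => #|anc t|) t1S.
exists t => // u ut; apply/negP => /tmin; apply/negP; rewrite -ltnNge.
apply: proper_card; apply/properP; split; last first.
  exists u; last by rewrite !inE eqxx.
  by rewrite !inE connect1 // andbT; apply: contraNneq (hdag _ _ ut) => ->.
apply/subsetP => v; rewrite !inE => /andP[vu vcu]; apply/andP; split.
  by apply: contraNneq (hdag _ _ ut) => <-.
by apply: connect_trans vcu (connect1 ut).
Qed.

Definition upd (y : asg X) {t} (b : X t) : asg X :=
  finfun (@dfwith G (fun u => X u) (fun u => y u) t b).

Lemma upd_same (y : asg X) {t} (b : X t) : upd y b t = b.
Proof. by rewrite ffunE dfwith_in. Qed.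

Lemma upd_other (y : asg X) {t} (b : X t) u : t != u -> upd y b u = y u.
Proof. by move=> tu; rewrite ffunE dfwith_out. Qed.

Lemma ev_setCD1 (S : {set G}) t (y : asg X) (b : X t) : t \in S ->
  evn b :&: ev (~: S) y = ev (~: (S :\ t)) (upd y b).
Proof.
move=> tS; apply/setP => w; rewrite in_setI; apply/andP/evP => [[wb /evP wy] u|wy].
  rewrite !inE negb_and negbK => /orP[/eqP->|uS].
    by rewrite upd_same; apply/eqP; rewrite inE in wb.
  by rewrite upd_other ?wy ?inE //; apply: contraNneq uS => <-.
split; first by rewrite inE wy ?upd_same // !inE eqxx.
apply/evP => u; rewrite inE => uS; have tu : t != u by apply: contraNneq uS => <-.
by rewrite -(upd_other y b _ tu) wy // !inE (negbTE uS) andbF.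
Qed.

Lemma setT_asg_neq0 : (forall s, (0 < #|X s|)%N) -> [set: asg X] != set0.
Proof.
move=> X_gt0; apply/set0Pn.
by exists (finfun (fun s => xchoose (elimT card_gt0P (X_gt0 s)))); rewrite inE.
Qed.

Context {R : realFieldType}.

Lemma partition_evn s (B : {set asg X}) (h : asg X -> R) :
  \sum_(a : X s) \sum_(w in evn a :&: B) h w = \sum_(w in B) h w.
Proof.
rewrite [RHS](partition_big (fun w : asg X => w s) predT) //=.
by apply: eq_bigr => a _; apply: eq_bigl => w; rewrite !inE andbC.
Qed.

Lemma sum_evn_mul s (B : {set asg X}) (h : asg X -> R) (g : X s -> R) :
  \sum_a (\sum_(w in evn a :&: B) h w) * g a = \sum_(w in B) h w * g (w s).
Proof.
rewrite -(partition_evn s); apply: eq_bigr => a _; rewrite mulr_suml.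
by apply: eq_bigr => w /setIP[]; rewrite inE => /eqP->.
Qed.

Lemma fcp_disintegration (P : {set asg X} -> {set asg X} -> R) s
    (B : {set asg X}) (g : X s -> R) : is_fcp P -> B != set0 ->
  \sum_(w in B) P [set w] setT * g (w s) = P B setT * \sum_a P (evn a) B * g a.
Proof.
move=> hP Bn; transitivity (P B setT * \sum_(w in B) P [set w] B * g (w s)).
  rewrite mulr_sumr; apply: eq_bigr => w wB.
  by rewrite (fcp_point_chain hP wB) mulrA (mulrC (P B _)).
rewrite -sum_evn_mul; congr (_ * _); apply: eq_bigr => a _.
by rewrite -fcp_sumE // fcp_setIl.
Qed.

Lemma fcp_nondesc_constraint (P : {set asg X} -> {set asg X} -> R) s x
    (g : X s -> R) : is_fcp P -> 0 <= \sum_a locmass par P s x a * g a ->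
  0 <= \sum_(w in ev (nondesc par s) x) P [set w] setT * g (w s).
Proof.
move=> hP; under eq_bigr do rewrite ffunE; move=> locg.
have Tn : [set: asg X] != set0 by apply/set0Pn; exists x.
have [P_ge0 _ _ _] := hP.1 setT Tn.
rewrite fcp_disintegration //; first exact: mulr_ge0.
by apply/set0Pn; exists x; apply/evP.
Qed.

Section Kernels.
Variable F : forall t, asg X -> {ffun X t -> R}.
Hypothesis F_local : forall t (v w : asg X),
  (forall u, u \in par t -> v u = w u) -> F t v = F t w.
Hypothesis F_sum1 : forall t v, \sum_a F t v a = 1.

Definition joint (w : asg X) := \prod_t F t w (w t).

Lemma sum_prod_kernels (S : {set G}) (y : asg X) :
  \sum_(w in ev (~: S) y) \prod_(t in S) F t w (w t) = 1.
Proof.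
have [n ltSn] := ubnP #|S|; elim: n S y ltSn => // n IHn S y /ltnSE leSn.
have [->|Sn] := eqVneq S set0; first by rewrite setC0 ev_setT big_set1 big_set0.
have [t tS tsrc] := dag_source Sn.
rewrite -(partition_evn t) -[RHS](F_sum1 t y); apply: eq_bigr => b _.
have ltStn : (#|S :\ t| < n)%N by rewrite (cardsD1 t S) tS in leSn.
rewrite -[RHS]mulr1 -[1 in RHS](IHn _ (upd y b) ltStn) mulr_sumr -ev_setCD1 //.
apply: eq_bigr => w /setIP[]; rewrite inE => /eqP wt /evP wy.
rewrite (big_setD1 t tS) /= wt.
by congr (_ * _); congr (_ _ _); apply: F_local => u /tsrc uS; rewrite wy ?inE.
Qed.

Lemma sum_joint_nondesc_evn s (x : asg X) (a : X s) :
  \sum_(w in evn a :&: ev (nondesc par s) x) joint w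
  = F s x a * \prod_(t in nondesc par s) F t x (x t).
Proof.
set Nd := nondesc par s; set D := desc par s.
have sD : s \notin D by rewrite !inE eqxx.
have NdC : ~: Nd = s |: D by rewrite setCK.
have evE : evn a :&: ev Nd x = ev (~: D) (upd x a).
  by rewrite /Nd /nondesc ev_setCD1 ?setU11 // setU1K.
transitivity (\sum_(w in evn a :&: ev Nd x)
    \prod_(t in Nd) F t x (x t) * (F s x a * \prod_(t in D) F t w (w t))).
  apply: eq_bigr => w /setIP[]; rewrite inE => /eqP ws /evP wN.
  have Fw t : (forall u, u \in par t -> u \in Nd) -> F t w = F t x.
    by move=> ptN; apply: F_local => u /ptN/wN.
  rewrite /joint (bigID (mem Nd)) /=; congr (_ * _).
    apply: eq_bigr => t tN; rewrite wN // Fw // => u; exact: nondesc_par.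
  rewrite (eq_bigl (mem (s |: D))) => [|t]; last by rewrite /= -NdC !inE.
  rewrite big_setU1 //= ws Fw // => u; exact: par_nondesc.
by rewrite evE -!mulr_sumr sum_prod_kernels mulr1 mulrC.
Qed.

Lemma sum_joint_nondesc s (x : asg X) :
  \sum_(w in ev (nondesc par s) x) joint w
  = \prod_(t in nondesc par s) F t x (x t).
Proof.
rewrite -(partition_evn s _ joint).
rewrite (eq_bigr _ (fun a _ => sum_joint_nondesc_evn s x a)).
by rewrite -mulr_suml F_sum1 mul1r.
Qed.

End Kernels.

End BayesianNetwork.

Section Construction.
Context {R : realFieldType} {G : finType} {X : G -> finType}.
Variable par : G -> {set G}.
Variables M Gam : forall s : G, asg X -> {ffun X s -> R} -> Prop.
Hypothesis hdag : dag par.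
Hypothesis X_gt0 : forall s, (0 < #|X s|)%N.
Hypothesis M_local : forall s (x y : asg X),
  (forall t, t \in par s -> x t = y t) -> M s x = M s y.
Hypothesis M_nonempty : forall s x, exists p, M s x p.
Hypothesis M_pmf : forall s x p, M s x p -> (forall a, 0 <= p a) /\ \sum_a p a = 1.
Hypothesis Gam_M : forall s x (p : {ffun X s -> R}),
  \sum_a p a = 1 -> (forall g, Gam s x g -> 0 <= \sum_a p a * g a) -> M s x p.
Variable q : {ffun asg X -> R}.
Hypothesis q_ge0 : forall w, 0 <= q w.
Hypothesis q_sum1 : \sum_w q w = 1.
Hypothesis q_Gam : forall s x g, Gam s x g ->
  0 <= \sum_(w in ev (nondesc par s) x) q w * g (w s).

Definition uniform t : {ffun X t -> R} := [ffun=> #|X t|%:R^-1].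

Definition choice_M t (w : asg X) : {ffun X t -> R} :=
  epsilon (inhabits [ffun=> 0]) (M t w).

Definition kernel (T : {set G}) t w : {ffun X t -> R} :=
  if t \in T then uniform t else choice_M t w.

Definition layer k w := \sum_(T : {set G} | #|T| == k) joint (kernel T) w.

Definition layers n w := if n is k.+1 then layer k w else q w.

Definition Plex := lexcond layers #|G|.+2.

Lemma uniform_gt0 t a : 0 < uniform t a.
Proof. by rewrite ffunE invr_gt0 ltr0n. Qed.

Lemma uniform_sum1 t : \sum_a uniform t a = 1.
Proof.
under eq_bigr do rewrite ffunE.
by rewrite sumr_const -[_ *+ _]mulr_natr mulVf // pnatr_eq0 -lt0n.
Qed.

Lemma choice_M_in t w : M t w (choice_M t w).
Proof. exact: epsilon_spec (M_nonempty t w). Qed.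

Lemma kernel_ge0 T t w a : 0 <= kernel T t w a.
Proof.
rewrite /kernel; case: ifP => _; first exact/ltW/uniform_gt0.
exact: (M_pmf _ _ _ (choice_M_in t w)).1.
Qed.

Lemma kernel_sum1 T t w : \sum_a kernel T t w a = 1.
Proof.
rewrite /kernel; case: ifP => _; first exact: uniform_sum1.
exact: (M_pmf _ _ _ (choice_M_in t w)).2.
Qed.

Lemma kernel_local T t (v w : asg X) :
  (forall u, u \in par t -> v u = w u) -> kernel T t v = kernel T t w.
Proof. by move=> vw; rewrite /kernel /choice_M (M_local _ _ _ vw). Qed.

Lemma joint_kernel_ge0 T w : 0 <= joint (kernel T) w.
Proof. by apply: prodr_ge0 => t _; apply: kernel_ge0. Qed.

Lemma layers_ge0 n w : 0 <= layers n w.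
Proof.
case: n => [|k] /=; first exact: q_ge0.
by apply: sumr_ge0 => T _; apply: joint_kernel_ge0.
Qed.

Lemma layers_charged w : exists2 n, (n < #|G|.+2)%N & 0 < layers n w.
Proof.
exists #|G|.+1 => //=; rewrite /layer (bigD1 setT) ?cardsT //=.
apply: ltr_pwDl; last by apply: sumr_ge0 => T _; apply: joint_kernel_ge0.
by apply: prodr_gt0 => t _; rewrite /kernel inE uniform_gt0.
Qed.

Lemma Plex_fcp : is_fcp Plex.
Proof. exact: lexcond_fcp layers_ge0 layers_charged. Qed.

Lemma Plex_point x : q x = Plex (ev setT x) setT.
Proof.
have mass0T : mass layers 0 setT = 1.
  by rewrite -q_sum1; apply: eq_bigl => w; rewrite inE.
have first0 : first_charged layers #|G|.+2 setT = 0%N.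
  apply: (first_charged_eq _ _ layers_ge0 layers_charged) => //.
  by rewrite mass0T ltr01.
by rewrite /Plex /lexcond first0 ev_setT setIT mass0T divr1 /mass big_set1.
Qed.

Lemma mass_layer j E :
  mass layers j.+1 E
  = \sum_(T : {set G} | #|T| == j) \sum_(w in E) joint (kernel T) w.
Proof. exact: exchange_big. Qed.

Lemma sum_joint_kernel_nondesc s x T :
  \sum_(w in ev (nondesc par s) x) joint (kernel T) w
  = \prod_(t in nondesc par s) kernel T t x (x t).
Proof. exact: (sum_joint_nondesc _ hdag _ (kernel_local T) (kernel_sum1 T)). Qed.

Lemma sum_joint_kernel_evn s x T a :
  \sum_(w in evn a :&: ev (nondesc par s) x) joint (kernel T) w
  = kernel T s x a * \sum_(w in ev (nondesc par s) x) joint (kernel T) w.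
Proof.
rewrite sum_joint_kernel_nondesc.
exact: (sum_joint_nondesc_evn _ hdag _ (kernel_local T) (kernel_sum1 T)).
Qed.

(* The event x_{N(s)} does not see the kernel of s, so a network uniformizing s
   gives it the same mass as the smaller network of the previous layer. *)
Lemma sum_joint_kernel_nondesc_eq0 s x (T : {set G}) : s \in T ->
  mass layers #|T| (ev (nondesc par s) x) <= 0 ->
  \sum_(w in ev (nondesc par s) x) joint (kernel T) w = 0.
Proof.
move=> sT; rewrite (cardsD1 s T) sT add1n mass_layer => le0.
have -> : \sum_(w in ev (nondesc par s) x) joint (kernel T) w
        = \sum_(w in ev (nondesc par s) x) joint (kernel (T :\ s)) w.
  rewrite !sum_joint_kernel_nondesc; apply: eq_bigr => t.
  by rewrite in_nondesc /kernel in_setD1 => /andP[-> _].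
apply/eqP; rewrite eq_le sumr_ge0 ?andbT => [|w _]; last exact: joint_kernel_ge0.
apply: le_trans le0; rewrite (bigD1 (T :\ s)) //= lerDl.
by apply: sumr_ge0 => T' _; apply: sumr_ge0 => w _; apply: joint_kernel_ge0.
Qed.

Lemma mass_layer_evn s x j a : mass layers j (ev (nondesc par s) x) <= 0 ->
  mass layers j.+1 (evn a :&: ev (nondesc par s) x)
  = choice_M s x a * mass layers j.+1 (ev (nondesc par s) x).
Proof.
move=> le0; rewrite !mass_layer mulr_sumr; apply: eq_bigr => T /eqP cardT.
rewrite sum_joint_kernel_evn /kernel; case: ifP => // sT.
by rewrite sum_joint_kernel_nondesc_eq0 ?cardT ?mulr0.
Qed.

Lemma Plex_locmass s x : M s x (locmass par Plex s x).
Proof.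
set B := ev (nondesc par s) x.
have Bn : B != set0 by apply/set0Pn; exists x; apply/evP.
have [_ pos below] := first_chargedP _ _ layers_ge0 layers_charged Bn.
have : forall a, locmass par Plex s x a = lexcond layers #|G|.+2 (evn a) B.
  by move=> a; rewrite ffunE.
rewrite /lexcond; case: (first_charged _ _ B) pos below => [|j] pos below PlexE.
  apply: Gam_M => [|g /q_Gam q_g].
    under eq_bigr do rewrite PlexE.
    by rewrite -mulr_suml partition_evn divff ?gt_eqF.
  under eq_bigr do rewrite PlexE mulrAC.
  by rewrite -mulr_suml sum_evn_mul; apply: divr_ge0 q_g (ltW pos).
have -> : locmass par Plex s x = choice_M s x.
  apply/ffunP => a; rewrite PlexE mass_layer_evn ?mulfK ?gt_eqF //.
  exact: below.
exact: choice_M_in.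
Qed.

End Construction.

Theorem proposition1 (R : realFieldType) (G : finType) (par : G -> {set G})
  (X : G -> finType)
  (M : forall s : G, asg X -> {ffun X s -> R} -> Prop)
  (Gam : forall s : G, asg X -> {ffun X s -> R} -> Prop)
  (hdag : dag par)
  (hX : forall s : G, exists a : X s, True)
  (hMpar : forall (s : G) (x y : asg X),
      (forall t, t \in par s -> x t = y t) -> M s x = M s y)
  (hGpar : forall (s : G) (x y : asg X),
      (forall t, t \in par s -> x t = y t) -> Gam s x = Gam s y)
  (hMne : forall (s : G) (x : asg X), exists p, M s x p)
  (hMpmf : forall (s : G) (x : asg X) (p : {ffun X s -> R}),
      M s x p -> (forall a, 0 <= p a) /\ \sum_a p a = 1)
  (hMG : forall (s : G) (x : asg X) (p : {ffun X s -> R}),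
      M s x p <->
      (\sum_a p a = 1 /\
       forall g, Gam s x g -> 0 <= \sum_a p a * g a)) :
  forall q : {ffun asg X -> R},
    (exists P : {set asg X} -> {set asg X} -> R,
        Firr par M P /\ forall x : asg X, q x = P (ev setT x) setT)
    <->
    ((forall x, 0 <= q x) /\ \sum_x q x = 1 /\
     forall (s : G) (x : asg X) (g : {ffun X s -> R}), Gam s x g ->
       0 <= \sum_(w in ev (nondesc par s) x) q w * g (w s)).
Proof.
have X_gt0 s : (0 < #|X s|)%N by have [a _] := hX s; apply/card_gt0P; exists a.
have Gam_M s x (p : {ffun X s -> R}) : \sum_a p a = 1 ->
    (forall g, Gam s x g -> 0 <= \sum_a p a * g a) -> M s x p.
  by move=> p1 pGam; apply/hMG.
move=> q; split=> [[P [[hP Ploc] qP]] | [q_ge0 [q_sum1 q_Gam]]].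
  have qE w : q w = P [set w] setT by rewrite qP ev_setT.
  have Tn := setT_asg_neq0 X_gt0.
  split; [|split].
  - by move=> w; rewrite qE; have [] := hP.1 setT Tn.
  - rewrite -(fcp_sum_points hP _ Tn); apply: eq_big => w; rewrite ?inE ?qE //.
  - move=> s x g gGam; under eq_bigr do rewrite qE.
    apply: fcp_nondesc_constraint hP _.
    exact: ((hMG _ _ _).1 (Ploc s x)).2 g gGam.
exists (Plex M q); split; last exact: Plex_point.
split; first exact: Plex_fcp.
exact: Plex_locmass hdag X_gt0 hMpar hMne hMpmf Gam_M q q_ge0 q_Gam.
Qed.
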